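(* Let $a\in\mathbb{R}$ and $k\ge0$. Then $$(z-a)^3q_{2k+1}^{(\mathrm{pre})}(z)=(z-a)^2z^{2k+2}+a\frac{(2k+1)!!}{2^{k+2}f_k(a^2)}\mathcal L_{k+1}(z,a),$$ $$(z-a)^3q_{2k}^{(\mathrm{pre})}(z)=a(z-a)^2\frac{e_{k+1}(a^2)}{f_k(a^2)}z^{2k+2}+\frac{(2k+3)!!}{2^{k+3}f_k(a^2)}\mathcal L_{k+2}(z,a)-a^2\frac{(2k+1)!!}{2^{k+2}f_k(a^2)}\mathcal L_{k+1}(z,a),$$ where $$\mathcal L_m(z,a)=(2(z-a)^2-1)\varkappa_m^{(\mathrm g)}(z,a)+2(z-a)e_{2m-1}(2za)-(z-a)\frac{2^{m+1}z^{2m}}{(2m-1)!!}e_{m-1}(a^2).$$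
   Context: $e_k(x)=\sum_{j=0}^kx^j/j!$, $f_k(x)=(k+1)e_k(x)-xe_{k-1}(x)$ (with $e_{-1}\equiv0$). $\varkappa_m^{(\mathrm g)}(z,w)=\sqrt2\sum_{n=0}^{m-1}\sum_{\ell=0}^{n}\Big(\frac{(\sqrt2z)^{2n+1}}{(2n+1)!!}\frac{(\sqrt2w)^{2\ell}}{(2\ell)!!}-\frac{(\sqrt2w)^{2n+1}}{(2n+1)!!}\frac{(\sqrt2z)^{2\ell}}{(2\ell)!!}\Big)$. The polynomials are $q_{2k}^{(\mathrm{pre})}(z)=\sum_{j=0}^{2k}\alpha_{2k,j}z^j$, $q_{2k+1}^{(\mathrm{pre})}(z)=\sum_{j=0}^{2k+1}\beta_{2k+1,j}z^j$ with, writing $c_{j,k}=\frac{2^jf_j(a^2)}{2^kf_k(a^2)}$: $\alpha_{2k,2j}=c_{j,k}\big[\sum_{\ell=j}^k(\ell+1-j)\frac{(2k+3)!!}{(2\ell+3)!!}(2a^2)^{\ell-j}-\sum_{\ell=j}^k(\ell-j)\frac{(2k+1)!!}{(2\ell+1)!!}(2a^2)^{\ell-j}\big]$ ($0\le j\le k$); $\alpha_{2k,2j+1}=2a\,c_{j,k}\big[\sum_{\ell=j}^{k-1}(\ell+1-j)\frac{(2k+3)!!}{(2\ell+5)!!}(2a^2)^{\ell-j}-\sum_{\ell=j}^{k-1}(\ell-j)\frac{(2k+1)!!}{(2\ell+3)!!}(2a^2)^{\ell-j}\big]$ ($0\le j\le k-1$); $\beta_{2k+1,2j}=a\,c_{j,k}\big[\frac{2j+1}{2k+3}(2a^2)^{k-j}+2\sum_{\ell=j}^k(\ell+1-j)\frac{(2k+1)!!}{(2\ell+3)!!}(2a^2)^{\ell-j}\big]$;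 $\beta_{2k+1,2j+1}=c_{j,k}\big[\frac{2j+3}{2k+3}(2a^2)^{k-j}+2\sum_{\ell=j}^k(\ell-j)\frac{(2k+1)!!}{(2\ell+3)!!}(2a^2)^{\ell-j}\big]$ ($0\le j\le k$). *)

From mathcomp Require Import all_boot all_order all_algebra.
Set Implicit Arguments. Unset Strict Implicit. Unset Printing Implicit Defensive.
Import Order.TTheory GRing.Theory Num.Theory.
Local Open Scope ring_scope.

Fixpoint dfact (n : nat) : nat :=
  match n with
  | 0 => 1
  | 1 => 1
  | (n'.+2) as m => (m * dfact n')%N
  end.

Section Defs.
Variable C : numClosedFieldType.

Definition e_ (k : nat) (x : C) : C := \sum_(j < k.+1) x ^+ j / (j`!)%:R.

(* e_{k-1} with the convention e_{-1} = 0 *)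
Definition e_pred (k : nat) (x : C) : C :=
  match k with 0 => 0 | k'.+1 => e_ k' x end.

Definition f_ (k : nat) (x : C) : C := (k.+1)%:R * e_ k x - x * e_pred k x.

Definition dfR (n : nat) : C := (dfact n)%:R.

Definition kappa (m : nat) (z w : C) : C :=
  sqrtC 2 * \sum_(n < m) \sum_(l < n.+1)
    ((sqrtC 2 * z) ^+ (2 * n).+1 / dfR (2 * n).+1 * (sqrtC 2 * w) ^+ (2 * l) / dfR (2 * l)
   - (sqrtC 2 * w) ^+ (2 * n).+1 / dfR (2 * n).+1 * (sqrtC 2 * z) ^+ (2 * l) / dfR (2 * l)).

Definition cjk (a : C) (j k : nat) : C :=
  (2 ^+ j * f_ j (a ^+ 2)) / (2 ^+ k * f_ k (a ^+ 2)).

Definition alpha_even (a : C) (k j : nat) : C :=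
  cjk a j k *
  (\sum_(j <= l < k.+1) (l.+1 - j)%:R * (dfR (2 * k + 3) / dfR (2 * l + 3)) * (2 * a ^+ 2) ^+ (l - j)
 - \sum_(j <= l < k.+1) (l - j)%:R * (dfR (2 * k + 1) / dfR (2 * l + 1)) * (2 * a ^+ 2) ^+ (l - j)).

Definition alpha_odd (a : C) (k j : nat) : C :=
  2 * a * cjk a j k *
  (\sum_(j <= l < k) (l.+1 - j)%:R * (dfR (2 * k + 3) / dfR (2 * l + 5)) * (2 * a ^+ 2) ^+ (l - j)
 - \sum_(j <= l < k) (l - j)%:R * (dfR (2 * k + 1) / dfR (2 * l + 3)) * (2 * a ^+ 2) ^+ (l - j)).

Definition beta_even (a : C) (k j : nat) : C :=
  a * cjk a j k *
  ((2 * j).+1%:R / (2 * k + 3)%:R * (2 * a ^+ 2) ^+ (k - j)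
   + 2 * \sum_(j <= l < k.+1) (l.+1 - j)%:R * (dfR (2 * k + 1) / dfR (2 * l + 3)) * (2 * a ^+ 2) ^+ (l - j)).

Definition beta_odd (a : C) (k j : nat) : C :=
  cjk a j k *
  ((2 * j + 3)%:R / (2 * k + 3)%:R * (2 * a ^+ 2) ^+ (k - j)
   + 2 * \sum_(j <= l < k.+1) (l - j)%:R * (dfR (2 * k + 1) / dfR (2 * l + 3)) * (2 * a ^+ 2) ^+ (l - j)).

(* q_{2k}^{(pre)}(z) = sum_{j=0}^{2k} alpha_{2k,j} z^j *)
Definition q_even (k : nat) (a z : C) : C :=
  \sum_(j < k.+1) alpha_even a k j * z ^+ (2 * j)
  + \sum_(j < k) alpha_odd a k j * z ^+ (2 * j).+1.

(* q_{2k+1}^{(pre)}(z) = sum_{j=0}^{2k+1} beta_{2k+1,j} z^j *)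
Definition q_odd (k : nat) (a z : C) : C :=
  \sum_(j < k.+1) (beta_even a k j * z ^+ (2 * j) + beta_odd a k j * z ^+ (2 * j).+1).

Definition Lm (m : nat) (z a : C) : C :=
  (2 * (z - a) ^+ 2 - 1) * kappa m z a + 2 * (z - a) * e_ (2 * m - 1) (2 * z * a)
  - (z - a) * (2 ^+ m.+1 * z ^+ (2 * m) / dfR (2 * m - 1)) * e_ (m - 1) (a ^+ 2).

End Defs.

From mathcomp Require Import all_boot all_order all_algebra.
From mathcomp Require Import ring zify.
Import Order.TTheory GRing.Theory Num.Theory.
Local Open Scope ring_scope.

(* Factor (2k+1)!!/(2^k f_k(a^2)) out of q^pre and 2^j f_j(a^2) out of its j-th
   coefficients: the normalized coefficients satisfy first-order recurrences in k.
   For the odd polynomials, the normalized polynomial grows from k to k+1 by an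
   explicit polynomial whose product with (z-a)^3 is found by a second induction
   and agrees with the growth of the right-hand side, read off from the
   recurrence m -> m+1 of L_m.  For the even polynomials the recurrences give
   a q_{2k} = (2k+3)/2 q_{2k+3} - a^2 q_{2k+1} - (top term of q_{2k+3}) in
   normalized form, so for a <> 0 the even identity follows from two instances
   of the odd one; at a = 0 it reduces to a telescoping evaluation of L_m(z,0). *)

Lemma dfact_gt0 n : (0 < dfact n)%N.
Proof.
suff: (0 < dfact n)%N /\ (0 < dfact n.+1)%N by case.
by elim: n => [|n [h1 h2]]; split => //=; rewrite muln_gt0.
Qed.

Lemma dfact_double n : dfact (2 * n) = (2 ^ n * n`!)%N.
Proof. by elim: n => [|n IH] //; rewrite mulnS /= IH factS expnS; lia. Qed.

Lemma fact_dfact n : n.+1`! = (dfact n.+1 * dfact n)%N.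
Proof. by elim: n => [|n IH] //; rewrite factS IH /=; lia. Qed.

Lemma big_nat_shift_weight (R : comPzRingType) (G : nat -> R) (t : R) j k :
  \sum_(j <= l < k.+1) (l - j)%:R * G l * t ^+ (l - j)
  = t * \sum_(j <= l < k) (l.+1 - j)%:R * G l.+1 * t ^+ (l - j).
Proof.
have [hjk | hkj] := leqP j k; last by rewrite !big_geq ?mulr0 // ltnW.
rewrite big_nat_recl // subnn mul0r mul0r add0r mulr_sumr.
by apply: eq_big_nat => l /andP[hjl _]; rewrite subSn // exprS; ring.
Qed.

Lemma sum_pull_ratio (R : comUnitRingType) (c d T : nat -> R) (D : R) j n :
  \sum_(j <= l < n) c l * (D / d l) * T l = D * \sum_(j <= l < n) c l / d l * T l.
Proof. by rewrite mulr_sumr; apply: eq_bigr => l _; rewrite mulrCA !mulrA. Qed.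

Section Prepolynomials.
Variable C : numClosedFieldType.

Lemma dfR_neq0 n : dfR C n != 0.
Proof. by rewrite pnatr_eq0 -lt0n dfact_gt0. Qed.

Lemma dfRSS n : dfR C n.+2 = n.+2%:R * dfR C n.
Proof. by rewrite /dfR /= natrM. Qed.

Lemma dfR_odd_rec k : dfR C (2 * k + 3) = (2 * k + 3)%:R * dfR C (2 * k + 1).
Proof.
have -> : (2 * k + 3 = (2 * k + 1).+2)%N by rewrite !addnS.
by rewrite dfRSS.
Qed.

Lemma dfR_double n : dfR C (2 * n) = 2 ^+ n * n`!%:R.
Proof. by rewrite /dfR dfact_double natrM natrX. Qed.

Lemma natr_fact_neq0 n : n`!%:R != 0 :> C.
Proof. by rewrite pnatr_eq0 -lt0n fact_gt0. Qed.

Ltac neq0 :=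
  repeat first [apply/andP; split | apply: mulf_neq0 | apply: expf_neq0 | apply: invr_neq0];
  try solve [ auto | exact: dfR_neq0 | exact: natr_fact_neq0
            | rewrite -?natrD -?natrM ?nat1r ?natr1 -?natrD -?natrM ?pnatr_eq0; lia ].

Lemma e_0 (x : C) : e_ 0 x = 1.
Proof. by rewrite /e_ big_ord1 expr0 divr1. Qed.

Lemma e_S k (x : C) : e_ k.+1 x = e_ k x + x ^+ k.+1 / k.+1`!%:R.
Proof. by rewrite /e_ big_ord_recr. Qed.

Lemma e_at0 k : e_ k (0 : C) = 1.
Proof.
rewrite /e_ big_ord_recl expr0 divr1 big1 ?addr0 // => i _.
by rewrite expr0n mul0r.
Qed.

Lemma f_0 (x : C) : f_ 0 x = 1.
Proof. by rewrite /f_ /= e_0 mulr0 subr0 mulr1. Qed.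

Lemma f_at0 k : f_ k (0 : C) = k.+1%:R.
Proof. by rewrite /f_ e_at0 mul0r subr0 mulr1. Qed.

Lemma f_E k (x : C) : f_ k x = (k.+1%:R - x) * e_ k x + k.+1%:R * x ^+ k.+1 / k.+1`!%:R.
Proof.
rewrite /f_; case: k => [|k] /=; first by rewrite e_0 factS fact0 expr1; field.
rewrite e_S !factS !natrM !exprS; field; neq0.
Qed.

Lemma f_S k (x : C) : f_ k.+1 x = f_ k x + e_ k.+1 x.
Proof. rewrite !f_E e_S !factS !natrM !exprS; field; neq0. Qed.

Lemma f_gt0 k (x : C) : 0 <= x -> 0 < f_ k x.
Proof.
move=> x_ge0; elim: k => [|k IH]; first by rewrite f_0 ltr01.
rewrite f_S ltr_wpDr // sumr_ge0 // => i _.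
by rewrite divr_ge0 ?exprn_ge0 ?ler0n.
Qed.

Definition kappa_term n (z w : C) :=
  2 ^+ n.+1 / dfR C (2 * n).+1 *
  (z * (z ^+ 2) ^+ n * e_ n (w ^+ 2) - w * (w ^+ 2) ^+ n * e_ n (z ^+ 2)).

Lemma kappaE m (z w : C) : kappa m z w = \sum_(n < m) kappa_term n z w.
Proof.
rewrite /kappa mulr_sumr; apply: eq_bigr => n _.
set s := sqrtC 2; have s2 : s ^+ 2 = 2 by rewrite sqrtCK.
have s_even y l : (s * y) ^+ (2 * l) = 2 ^+ l * (y ^+ 2) ^+ l.
  by rewrite exprM [(s * y) ^+ 2]exprMn s2 exprMn.
have s_odd y : s * (s * y) ^+ (2 * n).+1 = 2 ^+ n.+1 * (y * (y ^+ 2) ^+ n).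
  rewrite exprS s_even.
  have -> : s * (s * y * (2 ^+ n * (y ^+ 2) ^+ n)) = s ^+ 2 * 2 ^+ n * (y * (y ^+ 2) ^+ n) by ring.
  by rewrite s2 -exprS.
rewrite /kappa_term /e_ !mulr_sumr -sumrB mulr_sumr; apply: eq_bigr => l _.
rewrite mulrBr !mulrA !s_odd !s_even dfR_double.
field; neq0.
Qed.

Lemma Lm_S m (z a : C) :
  Lm m.+1 z a = (2 * (z - a) ^+ 2 - 1) * kappa m.+1 z a
    + 2 * (z - a) * e_ (2 * m).+1 (2 * z * a)
    - (z - a) * (2 ^+ m.+2 * (z ^+ 2) ^+ m.+1 / dfR C (2 * m).+1) * e_ m (a ^+ 2).
Proof. by rewrite /Lm -exprM subSS subn0 mulnS subn1. Qed.

Lemma Lm_SS m (z a : C) :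
  Lm m.+2 z a = Lm m.+1 z a + (2 * (z - a) ^+ 2 - 1) * kappa_term m.+1 z a
  + 2 * (z - a) * ((2 * z * a) ^+ (2 * m).+2 / (2 * m).+2`!%:R
                   + (2 * z * a) ^+ (2 * m).+3 / (2 * m).+3`!%:R)
  - (z - a) * (2 ^+ m.+3 * (z ^+ 2) ^+ m.+2 / dfR C (2 * m).+3 * e_ m.+1 (a ^+ 2)
              - 2 ^+ m.+2 * (z ^+ 2) ^+ m.+1 / dfR C (2 * m).+1 * e_ m (a ^+ 2)).
Proof.
rewrite !Lm_S (kappaE m.+2) big_ord_recr -kappaE /= mulnS !e_S.
ring.
Qed.

Section NormalizedCoefficients.
Variable a : C.
Local Notation t := (2 * a ^+ 2).
Local Notation F j := (f_ j (a ^+ 2)).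

Definition qnorm k := dfR C (2 * k + 1) / (2 ^+ k * F k).

Definition nbeta_even k j :=
  (2 * j + 1)%:R / dfR C (2 * k + 3) * t ^+ (k - j)
  + 2 * \sum_(j <= l < k.+1) (l.+1 - j)%:R / dfR C (2 * l + 3) * t ^+ (l - j).

Definition nbeta_odd k j :=
  (2 * j + 3)%:R / dfR C (2 * k + 3) * t ^+ (k - j)
  + 2 * \sum_(j <= l < k.+1) (l - j)%:R / dfR C (2 * l + 3) * t ^+ (l - j).

Definition nalpha_even k j :=
  (2 * k + 3)%:R * \sum_(j <= l < k.+1) (l.+1 - j)%:R / dfR C (2 * l + 3) * t ^+ (l - j)
  - \sum_(j <= l < k.+1) (l - j)%:R / dfR C (2 * l + 1) * t ^+ (l - j).

Definition nalpha_odd k j :=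
  (2 * k + 3)%:R * \sum_(j <= l < k) (l.+1 - j)%:R / dfR C (2 * l + 5) * t ^+ (l - j)
  - \sum_(j <= l < k) (l - j)%:R / dfR C (2 * l + 3) * t ^+ (l - j).

Lemma sum_shift_dfR d j k :
  \sum_(j <= l < k.+1) (l - j)%:R / dfR C (2 * l + d) * t ^+ (l - j)
  = t * \sum_(j <= l < k) (l.+1 - j)%:R / dfR C (2 * l + d.+2) * t ^+ (l - j).
Proof.
rewrite (@big_nat_shift_weight _ (fun l => (dfR C (2 * l + d))^-1)); congr (_ * _).
by apply: eq_bigr => l _; rewrite (_ : 2 * l.+1 + d = 2 * l + d.+2)%N; last lia.
Qed.

Lemma nbeta_evenS k j : (j <= k)%N ->
  nbeta_even k.+1 j = nbeta_even k j + t ^+ (k - j) * (t - (2 * j + 1)%:R) / dfR C (2 * k + 3).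
Proof.
move=> le_jk; rewrite /nbeta_even big_nat_recr /=; last exact: leqW.
have -> : (k.+1 - j = (k - j).+1)%N by lia.
have -> : (k.+2 - j = (k - j).+2)%N by lia.
have -> : (2 * k.+1 + 3 = (2 * k + 3).+2)%N by lia.
rewrite dfRSS exprS; move: (k - j)%N (subnK le_jk) => i <-.
field; neq0.
Qed.

Lemma nbeta_oddS k j : (j <= k)%N ->
  nbeta_odd k.+1 j = nbeta_odd k j + t ^+ (k - j) * (t - (2 * j + 3)%:R) / dfR C (2 * k + 3).
Proof.
move=> le_jk; rewrite /nbeta_odd big_nat_recr /=; last exact: leqW.
have -> : (k.+1 - j = (k - j).+1)%N by lia.
have -> : (2 * k.+1 + 3 = (2 * k + 3).+2)%N by lia.
rewrite dfRSS exprS; move: (k - j)%N (subnK le_jk) => i <-.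
field; neq0.
Qed.

Lemma nbeta_even_diag k : nbeta_even k k = (dfR C (2 * k + 1))^-1.
Proof. rewrite /nbeta_even big_nat1 subnn subSnn dfR_odd_rec; field; neq0. Qed.

Lemma nbeta_odd_diag k : nbeta_odd k k = (dfR C (2 * k + 1))^-1.
Proof. rewrite /nbeta_odd big_nat1 subnn dfR_odd_rec; field; neq0. Qed.

Lemma nalpha_even_nbeta k j : (j <= k)%N ->
  nalpha_even k j = (2 * k + 3)%:R / 2 * nbeta_even k.+1 j - a ^+ 2 * nbeta_even k j.
Proof.
move=> le_jk; rewrite nbeta_evenS // /nalpha_even /nbeta_even sum_shift_dfR.
rewrite !big_nat_recr //=; have -> : (k.+1 - j = (k - j).+1)%N by lia.
rewrite exprS; move: (k - j)%N (subnK le_jk) => i <-.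
field; neq0.
Qed.

Lemma nalpha_odd_nbeta k j : (j <= k)%N ->
  t * nalpha_odd k j = (2 * k + 3)%:R / 2 * nbeta_odd k.+1 j - a ^+ 2 * nbeta_odd k j.
Proof.
move=> le_jk; rewrite nbeta_oddS // /nalpha_odd /nbeta_odd.
set V := \sum_(j <= l < k) (l - j)%:R / _ * _.
have -> : V = t * \sum_(j <= l < k) (l.+1 - j)%:R / dfR C (2 * l + 5) * t ^+ (l - j)
              - (k - j)%:R / dfR C (2 * k + 3) * t ^+ (k - j).
  by rewrite -sum_shift_dfR big_nat_recr //= addrK.
rewrite sum_shift_dfR; move: (k - j)%N (subnK le_jk) => i <-.
field; neq0.
Qed.

Hypothesis F_neq0 : forall k, F k != 0.

Lemma beta_evenE k j : beta_even a k j = qnorm k * (a * 2 ^+ j * F j * nbeta_even k j).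
Proof.
rewrite /beta_even /nbeta_even /qnorm /cjk sum_pull_ratio dfR_odd_rec.
field; neq0.
Qed.

Lemma beta_oddE k j : beta_odd a k j = qnorm k * (2 ^+ j * F j * nbeta_odd k j).
Proof.
rewrite /beta_odd /nbeta_odd /qnorm /cjk sum_pull_ratio dfR_odd_rec.
field; neq0.
Qed.

Lemma alpha_evenE k j : alpha_even a k j = qnorm k * (2 ^+ j * F j * nalpha_even k j).
Proof.
rewrite /alpha_even /nalpha_even /qnorm /cjk !sum_pull_ratio dfR_odd_rec.
field; neq0.
Qed.

Lemma alpha_oddE k j : alpha_odd a k j = qnorm k * (2 * a * 2 ^+ j * F j * nalpha_odd k j).
Proof.
rewrite /alpha_odd /nalpha_odd /qnorm /cjk !sum_pull_ratio dfR_odd_rec.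
field; neq0.
Qed.

Variable z : C.

Definition nq_odd k := \sum_(j < k.+1) 2 ^+ j * F j *
  (a * nbeta_even k j * (z ^+ 2) ^+ j + nbeta_odd k j * (z * (z ^+ 2) ^+ j)).

Definition nq_even k := \sum_(j < k.+1) 2 ^+ j * F j *
  (nalpha_even k j * (z ^+ 2) ^+ j + 2 * a * nalpha_odd k j * (z * (z ^+ 2) ^+ j)).

Lemma q_oddE k : q_odd k a z = qnorm k * nq_odd k.
Proof.
rewrite /q_odd /nq_odd mulr_sumr; apply: eq_bigr => j _.
by rewrite beta_evenE beta_oddE -exprM [z ^+ (2 * j).+1]exprS; ring.
Qed.

Lemma q_evenE k : q_even k a z = qnorm k * nq_even k.
Proof.
have alpha_odd_diag : alpha_odd a k k = 0 by rewrite /alpha_odd !big_geq // subrr mulr0.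
rewrite /q_even [X in _ + X](_ : _ = \sum_(j < k.+1) alpha_odd a k j * z ^+ (2 * j).+1).
  rewrite -big_split mulr_sumr; apply: eq_bigr => j _ /=.
  by rewrite alpha_evenE alpha_oddE -exprM [z ^+ (2 * j).+1]exprS; ring.
by rewrite big_ord_recr /= alpha_odd_diag mul0r addr0.
Qed.

Lemma nq_even_from_odd k :
  a * nq_even k = (2 * k + 3)%:R / 2 * nq_odd k.+1 - a ^+ 2 * nq_odd k
                  - 2 ^+ k * F k.+1 / dfR C (2 * k + 1) * (a + z) * (z ^+ 2) ^+ k.+1.
Proof.
set top := 2 ^+ k.+1 * F k.+1 / dfR C (2 * k + 3) * (a + z) * (z ^+ 2) ^+ k.+1.
have top_eq : nq_odd k.+1 = \sum_(j < k.+1) 2 ^+ j * F j *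
    (a * nbeta_even k.+1 j * (z ^+ 2) ^+ j + nbeta_odd k.+1 j * (z * (z ^+ 2) ^+ j)) + top.
  rewrite /nq_odd big_ord_recr /= nbeta_even_diag nbeta_odd_diag /top.
  have -> : (2 * k.+1 + 1 = 2 * k + 3)%N by lia.
  by congr (_ + _); ring.
have -> : a * nq_even k = (2 * k + 3)%:R / 2 * (nq_odd k.+1 - top) - a ^+ 2 * nq_odd k.
  rewrite top_eq addrK /nq_even /nq_odd !mulr_sumr -sumrB.
  apply: eq_bigr => -[j /= lt_jk] _; rewrite nalpha_even_nbeta //.
  transitivity (2 ^+ j * F j * (a * ((2 * k + 3)%:R / 2 * nbeta_even k.+1 j
      - a ^+ 2 * nbeta_even k j) * (z ^+ 2) ^+ j
      + 2 * a ^+ 2 * nalpha_odd k j * (z * (z ^+ 2) ^+ j))); first ring.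
  by rewrite nalpha_odd_nbeta //; ring.
rewrite /top dfR_odd_rec (exprS 2 k); field; neq0.
Qed.

Definition incr_term j :=
  a * (t - (2 * j + 1)%:R) * (z ^+ 2) ^+ j + (t - (2 * j + 3)%:R) * (z * (z ^+ 2) ^+ j).

Definition nq_odd_incr k := \sum_(j < k.+1) 2 ^+ j * F j * t ^+ (k - j) * incr_term j.

Lemma nq_oddS k : nq_odd k.+1 = nq_odd k
  + (nq_odd_incr k + 2 ^+ k.+1 * F k.+1 * (a + z) * (z ^+ 2) ^+ k.+1) / dfR C (2 * k + 3).
Proof.
rewrite {1}/nq_odd big_ord_recr /= nbeta_even_diag nbeta_odd_diag.
have -> : (2 * k.+1 + 1 = 2 * k + 3)%N by lia.
rewrite mulrDl addrA; congr (_ + _); last by field; neq0.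
rewrite /nq_odd /nq_odd_incr mulr_suml -big_split; apply: eq_bigr => -[j /= lt_jk] _.
by rewrite nbeta_evenS // nbeta_oddS // /incr_term; field; neq0.
Qed.

Lemma nq_odd_incrS k : nq_odd_incr k.+1 = t * nq_odd_incr k + 2 ^+ k.+1 * F k.+1 * incr_term k.+1.
Proof.
rewrite /nq_odd_incr big_ord_recr /= subnn expr0 mulr1 mulr_sumr; congr (_ + _).
apply: eq_bigr => -[j /=]; rewrite ltnS => le_jk _.
by rewrite subSn // [_ ^+ (k - j).+1]exprS; ring.
Qed.

Definition odd_rhs k :=
  2 ^+ k * F k / dfR C (2 * k + 1) * (z - a) ^+ 2 * (z ^+ 2) ^+ k.+1 + a / 4 * Lm k.+1 z a.

Definition odd_rhs_step k :=
  (z - a) ^+ 2 * (2 * F k.+1 * (z ^+ 2) ^+ k.+2 - (2 * k + 3)%:R * F k * (z ^+ 2) ^+ k.+1)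
  + a * ((2 * (z - a) ^+ 2 - 1)
           * (z * (z ^+ 2) ^+ k.+1 * e_ k.+1 (a ^+ 2) - a * (a ^+ 2) ^+ k.+1 * e_ k.+1 (z ^+ 2))
         + (z - a) * (z ^+ 2) ^+ k.+1 * (a ^+ 2) ^+ k.+1 * ((2 * k + 3)%:R + 2 * z * a)
             / k.+1`!%:R
         - (z - a) * (2 * (z ^+ 2) ^+ k.+2 * e_ k.+1 (a ^+ 2)
                      - (2 * k + 3)%:R * (z ^+ 2) ^+ k.+1 * e_ k (a ^+ 2))).

Lemma odd_rhsS k : odd_rhs k.+1 = odd_rhs k + 2 ^+ k * odd_rhs_step k / dfR C (2 * k + 3).
Proof.
rewrite /odd_rhs /odd_rhs_step Lm_SS /kappa_term.
have -> : dfR C (2 * k.+1 + 1) = dfR C (2 * k + 3) by congr dfR; lia.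
have -> : dfR C (2 * k.+1).+1 = dfR C (2 * k + 3) by congr dfR; lia.
have -> : dfR C (2 * k).+3 = dfR C (2 * k + 3) by congr dfR; lia.
have -> : dfR C (2 * k).+1 = dfR C (2 * k + 1) by congr dfR; lia.
have fact_even : (2 * k).+2`! = (2 ^ k.+1 * k.+1`! * dfact (2 * k + 1))%N.
  by rewrite fact_dfact -dfact_double mulnS addn1.
have pow_even m : (2 * z * a) ^+ (2 * m) = 2 ^+ m * 2 ^+ m * (z ^+ 2) ^+ m * (a ^+ 2) ^+ m.
  by rewrite exprM -!exprMn; congr (_ ^+ _); ring.
rewrite (factS (2 * k).+2) fact_even.
have -> : ((2 * k).+3 = (2 * k.+1).+1)%N by lia.
have -> : ((2 * k).+2 = 2 * k.+1)%N by lia.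
rewrite [(2 * z * a) ^+ _.+1]exprS pow_even.
(* Generalized, as [natrM] would otherwise unfold [k.+1`!] into a product. *)
move: (k.+1`!) (natr_fact_neq0 k.+1) => K K_neq0.
rewrite !natrM natrX -/(dfR C (2 * k + 1)) dfR_odd_rec.
rewrite !(exprS 2) !(exprS (z ^+ 2)) !(exprS (a ^+ 2)).
field; neq0.
Qed.

Lemma nq_odd_incr_closed k :
  (z - a) ^+ 3 * (nq_odd_incr k + 2 ^+ k.+1 * F k.+1 * (a + z) * (z ^+ 2) ^+ k.+1)
  = 2 ^+ k * odd_rhs_step k.
Proof.
elim: k => [|k IH].
  rewrite /nq_odd_incr big_ord1 /odd_rhs_step /incr_term /= f_S f_0 !e_S !e_0.
  by rewrite !factS fact0 !(exprS (z ^+ 2)) !expr0 !expr1; field.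
have IH' : (z - a) ^+ 3 * nq_odd_incr k = 2 ^+ k * odd_rhs_step k
    - (z - a) ^+ 3 * (2 ^+ k.+1 * F k.+1 * (a + z) * (z ^+ 2) ^+ k.+1).
  by rewrite -IH; ring.
rewrite nq_odd_incrS.
transitivity (t * ((z - a) ^+ 3 * nq_odd_incr k) + (z - a) ^+ 3 *
  (2 ^+ k.+1 * F k.+1 * incr_term k.+1 + 2 ^+ k.+2 * F k.+2 * (a + z) * (z ^+ 2) ^+ k.+2)).
  by ring.
rewrite IH' /odd_rhs_step /incr_term !f_S f_E !e_S !factS !natrM.
rewrite !(exprS 2) !(exprS (z ^+ 2)) !(exprS (a ^+ 2)).
field; neq0.
Qed.

Lemma nq_odd_closed k : (z - a) ^+ 3 * nq_odd k = odd_rhs k.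
Proof.
elim: k => [|k IH]; last first.
  by rewrite nq_oddS mulrDr IH mulrA nq_odd_incr_closed odd_rhsS.
rewrite /nq_odd /odd_rhs big_ord1 /= nbeta_even_diag nbeta_odd_diag Lm_S kappaE big_ord1.
by rewrite /kappa_term f_0 !e_S !e_0 /dfR /= muln0 factS fact0 !expr0 !expr1; field.
Qed.

Lemma q_odd_identity k :
  (z - a) ^+ 3 * q_odd k a z
    = (z - a) ^+ 2 * z ^+ (2 * k + 2)
      + a * (dfR C (2 * k + 1) / (2 ^+ (k + 2) * f_ k (a ^+ 2))) * Lm (k + 1) z a.
Proof.
rewrite q_oddE mulrCA nq_odd_closed /odd_rhs /qnorm.
have -> : (2 * k + 2 = 2 * k.+1)%N by lia.
rewrite exprM (addn1 k) addn2 !(exprS 2); field; neq0.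
Qed.

Lemma q_even_identity_neq0 k : a != 0 ->
  (z - a) ^+ 3 * q_even k a z
    = a * (z - a) ^+ 2 * (e_ (k + 1) (a ^+ 2) / f_ k (a ^+ 2)) * z ^+ (2 * k + 2)
      + dfR C (2 * k + 3) / (2 ^+ (k + 3) * f_ k (a ^+ 2)) * Lm (k + 2) z a
      - a ^+ 2 * (dfR C (2 * k + 1) / (2 ^+ (k + 2) * f_ k (a ^+ 2))) * Lm (k + 1) z a.
Proof.
move=> a_neq0; apply: (mulfI a_neq0); rewrite q_evenE.
have -> : a * ((z - a) ^+ 3 * (qnorm k * nq_even k))
    = qnorm k * ((z - a) ^+ 3 * (a * nq_even k)) by ring.
rewrite nq_even_from_odd.
have -> : forall c N1 N0 T : C, (z - a) ^+ 3 * (c * N1 - a ^+ 2 * N0 - T)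
    = c * ((z - a) ^+ 3 * N1) - a ^+ 2 * ((z - a) ^+ 3 * N0) - (z - a) ^+ 3 * T.
  by move=> c N1 N0 T; ring.
rewrite !nq_odd_closed /odd_rhs /qnorm f_S.
have -> : (2 * k + 2 = 2 * k.+1)%N by lia.
have -> : (2 * k.+1 + 1 = 2 * k + 3)%N by lia.
rewrite exprM (addn1 k) (addn2 k) (addn3 k) dfR_odd_rec !(exprS 2) !(exprS (z ^+ 2)).
field; neq0.
Qed.

End NormalizedCoefficients.

Lemma nalpha_even_at0 k j : (j <= k)%N -> nalpha_even 0 k j = (2 * k + 3)%:R / dfR C (2 * j + 3).
Proof.
move=> le_jk; rewrite /nalpha_even sum_shift_dfR (expr2 (0 : C)) !mulr0 mul0r subr0.
rewrite big_nat_recl // subnn subSnn expr0 mulr1 big1_seq ?addr0 => [|l /andP[_]].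
  by rewrite mul1r.
by rewrite mem_index_iota => /andP[le_jl _]; rewrite (subSn le_jl) exprS mul0r mulr0.
Qed.

Lemma nq_even_at0 (z : C) k :
  nq_even 0 z k = (2 * k + 3)%:R *
    \sum_(j < k.+1) 2 ^+ j * j.+1%:R / dfR C (2 * j + 3) * (z ^+ 2) ^+ j.
Proof.
rewrite /nq_even mulr_sumr; apply: eq_bigr => -[j /=]; rewrite ltnS => le_jk _.
by rewrite nalpha_even_at0 // (expr2 (0 : C)) !mulr0 f_at0 !mul0r addr0; field; neq0.
Qed.

Lemma Lm_at0 (z : C) k :
  z ^+ 3 * \sum_(j < k.+1) 2 ^+ j * j.+1%:R / dfR C (2 * j + 3) * (z ^+ 2) ^+ j
  = Lm k.+2 z 0 / 8.
Proof.
have kappa_term_at0 n : kappa_term n z 0 = 2 ^+ n.+1 / dfR C (2 * n).+1 * (z * (z ^+ 2) ^+ n).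
  by rewrite /kappa_term (expr2 (0 : C)) mulr0 e_at0 !mul0r subr0 mulr1.
elim: k => [|k IH].
  rewrite big_ord1 Lm_S kappaE !big_ord_recr big_ord0 /= !kappa_term_at0 (expr2 (0 : C)) !mulr0.
  by rewrite !e_at0 /dfR /= !expr0 !expr1; field.
rewrite big_ord_recr /= mulrDr IH (Lm_SS k.+1) kappa_term_at0 !mulr0 (expr2 (0 : C)) mulr0 !e_at0.
have -> : (2 * k.+1 + 3 = (2 * k + 3).+2)%N by lia.
have -> : ((2 * k.+2).+1 = (2 * k + 3).+2)%N by lia.
have -> : ((2 * k.+1).+3 = (2 * k + 3).+2)%N by lia.
have -> : ((2 * k.+1).+1 = 2 * k + 3)%N by lia.
rewrite !expr0n /= dfRSS !(exprS 2) !(exprS (z ^+ 2)).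
field; neq0.
Qed.

Lemma q_even_identity (a z : C) k : (forall n, f_ n (a ^+ 2) != 0) ->
  (z - a) ^+ 3 * q_even k a z
    = a * (z - a) ^+ 2 * (e_ (k + 1) (a ^+ 2) / f_ k (a ^+ 2)) * z ^+ (2 * k + 2)
      + dfR C (2 * k + 3) / (2 ^+ (k + 3) * f_ k (a ^+ 2)) * Lm (k + 2) z a
      - a ^+ 2 * (dfR C (2 * k + 1) / (2 ^+ (k + 2) * f_ k (a ^+ 2))) * Lm (k + 1) z a.
Proof.
move=> F_neq0; have [a0 | a_neq0] := eqVneq a 0; last exact: q_even_identity_neq0.
have := Lm_at0 z k; rewrite a0 in F_neq0 *.
rewrite q_evenE // nq_even_at0 /qnorm; set S := \sum_(j < k.+1) _ => LS.
have -> : Lm (k + 2) z 0 = 8 * (z ^+ 3 * S) by rewrite addn2 LS; field; neq0.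
rewrite (expr2 (0 : C)) mulr0 f_at0 subr0 (exprD 2 k 3) dfR_odd_rec.
field; neq0.
Qed.

End Prepolynomials.

Theorem lemma4p2 (C : numClosedFieldType) (a z : C) (k : nat) :
  a \is Num.real ->
  (z - a) ^+ 3 * q_odd k a z
    = (z - a) ^+ 2 * z ^+ (2 * k + 2)
      + a * (dfR C (2 * k + 1) / (2 ^+ (k + 2) * f_ k (a ^+ 2))) * Lm (k + 1) z a
  /\
  (z - a) ^+ 3 * q_even k a z
    = a * (z - a) ^+ 2 * (e_ (k + 1) (a ^+ 2) / f_ k (a ^+ 2)) * z ^+ (2 * k + 2)
      + dfR C (2 * k + 3) / (2 ^+ (k + 3) * f_ k (a ^+ 2)) * Lm (k + 2) z a
      - a ^+ 2 * (dfR C (2 * k + 1) / (2 ^+ (k + 2) * f_ k (a ^+ 2))) * Lm (k + 1) z a.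
Proof.
move=> a_real.
have F_neq0 n : f_ n (a ^+ 2) != 0 by rewrite lt0r_neq0 // f_gt0 // -realEsqr.
by split; [exact: q_odd_identity | exact: q_even_identity].
Qed.
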